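(* Suppose actions are chosen by contextual GP-TS-SDF: given $\mathcal{F}_{t-1}$, sample $g_t\sim\mathcal{GP}(\mu_{t-1}(\cdot,\cdot),\nu_t^2\sigma^2_{t-1}(\cdot,\cdot))$ and, for the given context $z_t$, select $x_t\in\arg\max_{x\in\mathcal{Q}}g_t(z_t,x)$. For any filtration $\mathcal{F}_{t-1}$ and given context $z_t$, conditioned on the event $E^f(t)$, $$\mathbb{P}\left(x_t\in\mathcal{Q}\setminus S_t\mid\mathcal{F}_{t-1}\right)\ge p-1/t^2,\qquad p=\frac{1}{4e\sqrt{\pi}}.$$
   Context: Setting (contextual GP bandits with delayed feedback). $\mathcal{Q}\subset\mathbb{R}^n$ finite action set, $\mathcal{Z}\subset\mathbb{R}^{n'}$ finite context set. $k$ a positive semidefinite kernel on $\mathcal{Z}\times\mathcal{Q}$ with $k\le1$; $g$ in its RKHS with $\|g\|_k\le\mathcal{B}_f$. In round $t$ the environment gives a context $z_t$, the learner selects $x_t\in\mathcal{Q}$ and gets $y_t=g(z_t,x_t)+\epsilon_t$ ($R$-sub-Gaussian $\epsilon_t$, $|y_t|\le\mathcal{B}_y$), observed after a random delay $d_t\in\{0,1,\ldots\}$ drawn from $\mathcal{D}$. For an integer $m\ge1$, $\rho_m=\mathbb{P}(d_s\le m)$, $\tilde y_{s,t}=y_s\mathbb{1}\{d_s\le\min(m,t-s)\}$. With $\lambda>0$, $w_i=(z_i,x_i)$, $w=(z,x)$: $\mu_{t-1}(w)=\mathbf{k}_{t-1}(w)^\top(\mathbf{K}_{t-1}+\lambda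 I)^{-1}\tilde{\mathbf{y}}_{t-1}$, $\sigma^2_{t-1}(w,w')=k(w,w')-\mathbf{k}_{t-1}(w)^\top(\mathbf{K}_{t-1}+\lambda I)^{-1}\mathbf{k}_{t-1}(w')$, $\sigma^2_{t-1}(w)=\sigma^2_{t-1}(w,w)$, $\mathbf{k}_{t-1}(w)=(k(w,w_i))_{i\le t-1}$, $\mathbf{K}_{t-1}=(k(w_i,w_j))_{i,j\le t-1}$, $\tilde{\mathbf{y}}_{t-1}=(\tilde y_{s,t})_{s\le t-1}$. $\gamma_t=\max_A\frac12\log\det(I+\lambda^{-1}\mathbf{K}_A)$ over collections of $t$ points of $\mathcal{Z}\times\mathcal{Q}$. For $\delta\in(0,1)$: $\beta_t=\mathcal{B}_f+(R+\mathcal{B}_y)\sqrt{2(\gamma_{t-1}+1+\log(4/\delta))}$, $\nu_t=\mathcal{B}_y\sum_{s=t-m}^{t-1}\sigma_{t-1}(z_s,x_s)+\beta_t$ (terms with $s<1$ omitted), $c_t=\nu_t(1+\sqrt{2\log(|\mathcal{Z}||\mathcal{Q}|t^2)})$. $\mathcal{F}_{t-1}$: history up to round $t-1$. $E^f(t)$: the event that $|\mu_{t-1}(z,x)-\rho_mg(z,x)|\le\nu_t\sigma_{t-1}(z,x)$ for all $z,x$. With $x_t^\star\in\arg\max_{x\in\mathcal{Q}}g(z_t,x)$ and $\Delta(z_t,x)=g(z_t,x_t^\star)-g(z_t,x)$, the saturated set is $S_t=\{x\in\mathcal{Q}:\rho_m\Delta(z_t,x)>c_t\sigma_{t-1}(z_t,x)\}$.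 *)

From HB Require Import structures.
From mathcomp Require Import all_boot all_order all_algebra.
From mathcomp Require Import all_classical all_reals all_analysis.
Set Implicit Arguments.
Unset Strict Implicit.
Unset Printing Implicit Defensive.
Import Order.TTheory GRing.Theory Num.Theory.
Local Open Scope classical_set_scope.
Local Open Scope ring_scope.

Section GPTS.
Variables (R : realType) (Z Q : finType).
Local Notation W := (Z * Q)%type.

Definition psd_kernel (k : W -> W -> R) : Prop :=
  forall (n : nat) (ws : 'I_n -> W) (a : 'I_n -> R),
    0 <= \sum_(i < n) \sum_(j < n) a i * a j * k (ws i) (ws j).

(* g lies in the RKHS of k (on the finite domain W) with norm <= B *)
Definition rkhs_norm_le (k : W -> W -> R) (g : W -> R) (B : R) : Prop :=
  exists alpha : W -> R,
    (forall w, g w = \sum_(v : W) k w v * alpha v) /\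
    \sum_(v : W) \sum_(u : W) alpha v * alpha u * k v u <= B ^+ 2.

Definition Kmat (k : W -> W -> R) n (ws : 'I_n -> W) : 'M[R]_n :=
  \matrix_(i, j) k (ws i) (ws j).
Definition kvec (k : W -> W -> R) n (ws : 'I_n -> W) (w : W) : 'rV[R]_n :=
  \row_i k w (ws i).

Definition post_mean (k : W -> W -> R) (lam : R) n (ws : 'I_n -> W)
    (yv : 'cV[R]_n) (w : W) : R :=
  (kvec k ws w *m invmx (Kmat k ws + lam%:M) *m yv) 0 0.
Definition post_cov (k : W -> W -> R) (lam : R) n (ws : 'I_n -> W)
    (w w' : W) : R :=
  k w w' - (kvec k ws w *m invmx (Kmat k ws + lam%:M) *m (kvec k ws w')^T) 0 0.
Definition post_sd (k : W -> W -> R) (lam : R) n (ws : 'I_n -> W) (w : W) : R :=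
  Num.sqrt (post_cov k lam ws w w).

(* censored observations ytilde_{s,t}, with round s = i.+1 *)
Definition ytil (m t : nat) n (y : 'I_n -> R) (dl : 'I_n -> nat) : 'cV[R]_n :=
  \col_i (if (dl i <= minn m (t - i.+1))%N then y i else 0).

Definition info_gain (k : W -> W -> R) (lam : R) (n : nat) : R :=
  \big[Num.max/0]_(A : {ffun 'I_n -> W})
     (ln (\det (1%:M + lam^-1 *: Kmat k (fun i => A i))) / 2).

Definition beta_t (k : W -> W -> R) (lam Bf Rn By delta : R) (t : nat) : R :=
  Bf + (Rn + By) *
       Num.sqrt (2 * (info_gain k lam t.-1 + 1 + ln (4 / delta))).

(* nu_t ; ws i is (z_s, x_s) with s = i.+1 *)
Definition nu_t (k : W -> W -> R) (lam Bf Rn By delta : R) (m t : nat)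
    (ws : 'I_t.-1 -> W) : R :=
  By * (\sum_(i < t.-1 | (t - m <= i.+1)%N) post_sd k lam ws (ws i))
  + beta_t k lam Bf Rn By delta t.

Definition c_t (nu : R) (t : nat) : R :=
  nu * (1 + Num.sqrt (2 * ln ((#|Z| * #|Q| * t ^ 2)%N%:R))).

(* rho_m = P(d <= m) for the delay distribution D on nat *)
Definition rho (D : nat -> R) (m : nat) : R := \sum_(i < m.+1) D i.

Definition Ef_event (g : W -> R) (mu sd : W -> R) (rhom nu : R) : Prop :=
  forall w, `|mu w - rhom * g w| <= nu * sd w.

(* saturated set S_t, with xstar a maximiser of g(z_t, .) *)
Definition saturated (g : W -> R) (sd : W -> R) (rhom c : R) (zt : Z)
    (xstar : Q) (x : Q) : bool :=
  c * sd (zt, x) < rhom * (g (zt, xstar) - g (zt, x)).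

(* law N(m, v) on R, v the variance; degenerate (Dirac) when v = 0 *)
Definition gauss_law (m v : R) : set R -> \bar R :=
  fun A => if v == 0 then \d_m A else normal_prob m (Num.sqrt v) A.

(* G is a Gaussian random vector indexed by W with given mean and covariance
   (every linear combination is normal with the induced mean and variance) *)
Definition gaussian_vector d (Omega : measurableType d)
    (P : probability Omega R) (G : Omega -> W -> R)
    (mean : W -> R) (cov : W -> W -> R) : Prop :=
  forall a : W -> R,
    measurable_fun setT (fun om => \sum_(w : W) a w * G om w) /\
    forall A : set R, measurable A ->
      P ((fun om => \sum_(w : W) a w * G om w) @^-1` A) =
      gauss_law (\sum_(w : W) a w * mean w)
                (\sum_(w : W) \sum_(w' : W) a w * a w' * cov w w') A.

End GPTS.

Definition p_const {R : realType} : R :=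
  (4 * expR 1 * Num.sqrt (pi : R))^-1.

From HB Require Import structures.
From mathcomp Require Import all_boot all_order all_algebra.
From mathcomp Require Import all_classical all_reals all_analysis.
From mathcomp Require Import ring lra measurable_realfun.
Import Order.TTheory GRing.Theory Num.Theory numFieldNormedType.Exports.
Set Implicit Arguments.
Unset Strict Implicit.
Unset Printing Implicit Defensive.

Local Open Scope classical_set_scope.
Local Open Scope ring_scope.

(* On E^f(t) write s_x = nu_t sigma_{t-1}(z_t, x) for the standard deviation of g_t(z_t, x)
   and L = sqrt (2 ln (|Z| |Q| t^2)), so that c_t sigma_{t-1}(z_t, x) = (1 + L) s_x.
   If g_t(z_t, x_star) >= mu(x_star) + s_{x_star} while no g_t(z_t, x) exceeds
   mu(x) + L s_x, then chaining these bounds through the argmax property of x_t and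
   E^f(t) gives rho_m Delta(z_t, x_t) <= c_t sigma_{t-1}(z_t, x_t): x_t is unsaturated.
   The first event has probability at least p, since the Gaussian density is at least
   e^(-9/8) / (s sqrt (2 pi)) on [mu + s, mu + 3s/2]; each of the |Q| exceedances has
   probability at most e^(-L^2/2) = 1 / (|Z| |Q| t^2), by comparing the tail with a
   shifted Gaussian, and a union bound concludes. *)

Section gaussian_tails.
Variable R : realType.
Implicit Types m s V a x : R.

Lemma p_const_gt0 : 0 < (p_const : R).
Proof. by rewrite invr_gt0 !mulr_gt0 ?expR_gt0 ?sqrtr_gt0 ?pi_gt0. Qed.

Lemma p_const_le1 : (p_const : R) <= 1.
Proof.
have p0 : 0 < 4 * expR 1 * Num.sqrt (pi : R) by rewrite -invr_gt0 p_const_gt0.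
rewrite /p_const invr_le1 ?unitfE ?gt_eqF //.
have e1 : 1 <= expR (1 : R) by have := expR_ge1Dx (1 : R); lra.
have pi1 : 1 <= Num.sqrt (pi : R) by rewrite -sqrtr1 ler_sqrt //; have := @pi_ge2 R; lra.
nra.
Qed.

Lemma normal_peakE s : 0 < s -> normal_peak s = (s * Num.sqrt (pi *+ 2))^-1.
Proof. by move=> s0; rewrite /normal_peak -mulrnAr sqrtrM ?sqr_ge0 // sqrtr_sqr gtr0_norm. Qed.

Lemma normal_pdf_le_shift m s a x : 0 < s -> 0 <= a -> m + a * s <= x ->
  normal_pdf m s x <= expR (- (a ^+ 2 / 2)) * normal_pdf (m + a * s) s x.
Proof.
move=> s0 a0 hx; rewrite !normal_pdfE ?gt_eqF // mulrCA ler_wpM2l ?normal_peak_ge0 //.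
rewrite /normal_fun -expRD ler_expR -subr_ge0.
have -> : - (a ^+ 2 / 2) + - (x - (m + a * s)) ^+ 2 / (s ^+ 2 *+ 2)
          - - (x - m) ^+ 2 / (s ^+ 2 *+ 2) = a * (x - m - a * s) / s.
  by field; rewrite gt_eqF.
by apply: divr_ge0; [apply: mulr_ge0 => //; lra | exact: ltW].
Qed.

Lemma gauss_law_upper_tail m V a : 0 <= V -> 0 <= a ->
  (gauss_law m V `](m + a * Num.sqrt V)%R, +oo[ <= (expR (- (a ^+ 2 / 2)))%:E)%E.
Proof.
move=> V0 a0; rewrite /gauss_law; have [->|V_neq0] := eqVneq V 0.
  rewrite diracE sqrtr0 mulr0 addr0 memNset ?lee_fin ?expR_ge0 //=.
  by rewrite in_itv /= ltxx.
set s := Num.sqrt V; have s0 : 0 < s by rewrite sqrtr_gt0 lt_def V_neq0.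
have mpdf c : measurable_fun setT (EFin \o normal_pdf c s).
  by apply/measurable_EFinP; exact: measurable_normal_pdf.
rewrite /normal_prob; apply: le_trans (_ : _ <= \int[lebesgue_measure]_(x in setT)
    ((expR (- (a ^+ 2 / 2)))%:E * (normal_pdf (m + a * s) s x)%:E))%E _.
  apply: le_trans (_ : _ <= \int[lebesgue_measure]_(x in `](m + a * s)%R, +oo[)
      ((expR (- (a ^+ 2 / 2)))%:E * (normal_pdf (m + a * s) s x)%:E))%E _.
    apply: ge0_le_integral => //.
    - by move=> x _; rewrite lee_fin normal_pdf_ge0.
    - exact: measurable_funTS (mpdf m).
    - by apply: measurable_funTS; apply: measurable_funeM; exact: mpdf.
    move=> x /=; rewrite in_itv /= andbT => /ltW hx.
    by rewrite -EFinM lee_fin normal_pdf_le_shift.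
  apply: ge0_subset_integral => //; first by apply: measurable_funeM; exact: mpdf.
  by move=> x _; rewrite -EFinM lee_fin mulr_ge0 ?expR_ge0 ?normal_pdf_ge0.
rewrite ge0_integralZl //.
- by rewrite integral_normal_pdf mule1.
- exact: mpdf.
- by move=> x _; rewrite lee_fin normal_pdf_ge0.
Qed.

Lemma normal_pdf_ge_near_mean m s x : 0 < s -> m + s <= x <= m + s * (3 / 2) ->
  normal_peak s * expR (- (9 / 8)) <= normal_pdf m s x.
Proof.
move=> s0 /andP[h1 h2]; rewrite normal_pdfE ?gt_eqF // ler_wpM2l ?normal_peak_ge0 //.
rewrite /normal_fun ler_expR mulNr lerN2 ler_pdivrMr; last first.
  by rewrite pmulrn_lgt0 // exprn_gt0.
rewrite -mulr_natr; nra.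
Qed.

(* The mass of the bound of [normal_pdf_ge_near_mean] over an interval of length [s/2];
   the slack is [e^(-1/8) >= 7/8 > sqrt 2 / 2]. *)
Lemma p_const_le_normal_mass s : 0 < s ->
  p_const <= normal_peak s * expR (- (9 / 8)) * (s / 2).
Proof.
move=> s0; rewrite normal_peakE //.
have e98 : expR (- (9 / 8) : R) = (expR 1)^-1 * expR (- (1 / 8)).
  by rewrite -expRN -expRD; congr expR; lra.
have sqrt2pi : Num.sqrt (pi *+ 2 : R) = Num.sqrt 2 * Num.sqrt pi.
  by rewrite -sqrtrM ?ler0n // mulr_natl.
have r2 : 0 < Num.sqrt (2 : R) by rewrite sqrtr_gt0 ltr0n.
have rpi : 0 < Num.sqrt (pi : R) by rewrite sqrtr_gt0 pi_gt0.
have e0 : 0 < expR (1 : R) by exact: expR_gt0.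
rewrite e98 sqrt2pi.
have -> : (s * (Num.sqrt 2 * Num.sqrt pi))^-1 * ((expR 1)^-1 * expR (- (1 / 8))) * (s / 2)
    = p_const * (2 * expR (- (1 / 8)) / Num.sqrt 2).
  by rewrite /p_const; field; rewrite !gt_eqF.
rewrite ler_peMr ?(ltW p_const_gt0) // ler_pdivlMr //.
have e18 : 7 / 8 <= expR (- (1 / 8) : R) by have := expR_ge1Dx (- (1 / 8) : R); lra.
have r2sq : Num.sqrt (2 : R) * Num.sqrt 2 = 2 by rewrite -expr2 sqr_sqrtr.
have r2le : Num.sqrt (2 : R) <= 3 / 2 by nra.
lra.
Qed.

Lemma gauss_law_ge_p_const m V : 0 <= V ->
  ((p_const : R)%:E <= gauss_law m V `[(m + Num.sqrt V)%R, +oo[)%E.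
Proof.
move=> V0; rewrite /gauss_law; have [->|V_neq0] := eqVneq V 0.
  by rewrite diracE sqrtr0 addr0 mem_set /= ?in_itv /= ?lexx // lee_fin p_const_le1.
set s := Num.sqrt V; have s0 : 0 < s by rewrite sqrtr_gt0 lt_def V_neq0.
set c := normal_peak s * expR (- (9 / 8)).
have mpdf : measurable_fun setT (EFin \o normal_pdf m s).
  by apply/measurable_EFinP; exact: measurable_normal_pdf.
have leb := lebesgue_measure_itv `[(m + s)%R, (m + s * (3 / 2))%R].
rewrite /= lte_fin ifT in leb; last by nra.
rewrite /normal_prob; apply: le_trans (_ : _ <= \int[lebesgue_measure]_(x in
    `[(m + s)%R, (m + s * (3 / 2))%R]) (normal_pdf m s x)%:E)%E _; last first.
  apply: ge0_subset_integral => //.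
  - exact: measurable_funTS mpdf.
  - by move=> x _; rewrite lee_fin normal_pdf_ge0.
  - by move=> x /=; rewrite !in_itv /= andbT => /andP[].
apply: le_trans (_ : _ <= \int[lebesgue_measure]_(x in
    `[(m + s)%R, (m + s * (3 / 2))%R]) (cst c%:E x))%E _.
  rewrite integral_cst // [X in (_ * X)%E]leb -EFinD -EFinM lee_fin.
  by rewrite (_ : _ - _ = s / 2) ?p_const_le_normal_mass //; lra.
apply: ge0_le_integral => //.
- by move=> x _; rewrite lee_fin mulr_ge0 ?normal_peak_ge0 ?expR_ge0.
- exact: measurable_funTS mpdf.
- by move=> x /=; rewrite in_itv /= => hx; rewrite lee_fin normal_pdf_ge_near_mean.
Qed.

End gaussian_tails.

Lemma sum_delta_mull (R : pzSemiRingType) (T : finType) (w : T) (r : R) (F : T -> R) :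
  \sum_(v : T) (if v == w then r else 0) * F v = r * F w.
Proof.
under eq_bigr => v _ do rewrite (fun_if (fun a => a * F v)) mul0r.
by rewrite -big_mkcond big_pred1_eq.
Qed.

(* With [s = 0], [normal_pdf m s] is the indicator of [[0, 1]] whatever [m]. *)
Lemma normal_prob0_itv (R : realType) (m a b : R) : 0 <= a -> a < b -> b <= 1 ->
  normal_prob m 0 `]a, b] = (b - a)%:E.
Proof.
move=> a0 ab b1; rewrite /normal_prob (eq_integral (cst 1%E)); last first.
  move=> x; rewrite inE /= in_itv /= => /andP[xa xb].
  by rewrite /normal_pdf eqxx indicE mem_set //= in_itv /=; apply/andP; split; lra.
have leb := lebesgue_measure_itv `]a, b].
rewrite /= lte_fin ab in leb.
by rewrite integral_cst // [X in (_ * X)%E]leb mul1e EFinD.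
Qed.

Section gaussian_vector_coordinates.
Variables (R : realType) (Z Q : finType) (d : measure_display) (Omega : measurableType d).
Variables (P : probability Omega R) (G : Omega -> Z * Q -> R).
Variables (mean : Z * Q -> R) (cov : Z * Q -> Z * Q -> R).
Hypothesis gaussG : gaussian_vector P G mean cov.

Lemma gaussian_vector_scaled_coord w r :
  measurable_fun setT (fun om => r * G om w) /\
  forall A : set R, measurable A ->
    P ((fun om => r * G om w) @^-1` A) = gauss_law (r * mean w) (r * r * cov w w) A.
Proof.
have [mG lawG] := gaussG (fun v => if v == w then r else 0).
have covE : \sum_v \sum_v' (if v == w then r else 0) * (if v' == w then r else 0) * cov v v'
    = r * r * cov w w.
  under eq_bigr => v _ do under eq_bigr => v' _ do rewrite mulrAC mulrC.
  under eq_bigr => v _ do rewrite sum_delta_mull mulrCA.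
  by rewrite sum_delta_mull mulrA.
split; first by apply: eq_measurable_fun mG => om _; rewrite sum_delta_mull.
move=> A mA; rewrite -(@sum_delta_mull _ _ w r mean) -covE -lawG //; congr (P _).
by apply/seteqP; split => om /=; rewrite sum_delta_mull.
Qed.

Lemma gaussian_vector_coord_law w (A : set R) : measurable A ->
  P ((fun om => G om w) @^-1` A) = gauss_law (mean w) (cov w w) A.
Proof.
have [_ lawG] := gaussian_vector_scaled_coord w 1.
move=> mA; have := lawG A mA; rewrite !mul1r => <-.
by congr (P _); apply/seteqP; split => om /=; rewrite mul1r.
Qed.

Lemma measurable_gaussian_vector_coord w (A : set R) : measurable A ->
  measurable ((fun om => G om w) @^-1` A).
Proof.
have [mG _] := gaussian_vector_scaled_coord w 1.
have mGw : measurable_fun setT (fun om => G om w).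
  by apply: eq_measurable_fun mG => om _; rewrite mul1r.
by move=> mA; rewrite -[_ @^-1` _]setTI; exact: mGw.
Qed.

(* For a negative variance [Num.sqrt] returns [0], so [gauss_law] would make both
   [G w] and [2 * G w] uniform on [[0, 1]]. *)
Lemma gaussian_vector_var_ge0 w : 0 <= cov w w.
Proof.
rewrite leNgt; apply/negP => cov_lt0.
have [_ law1] := gaussian_vector_scaled_coord w 1.
have [_ law2] := gaussian_vector_scaled_coord w 2.
have sameE : (fun om => 2 * G om w) @^-1` `](2^-1 : R), 1] =
             (fun om => 1 * G om w) @^-1` `](4^-1 : R), 2^-1].
  by apply/seteqP; split => om /=; rewrite !in_itv /= => /andP[? ?]; apply/andP; split; lra.
have := law2 _ (measurable_itv `](2^-1 : R), 1]).
rewrite sameE law1; last exact: measurable_itv.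
have cov2_lt0 : 2 * 2 * cov w w < 0 by nra.
rewrite /gauss_law !mul1r (negbTE (ltr0_neq0 cov_lt0)) (negbTE (ltr0_neq0 cov2_lt0)).
have u1 : normal_prob (mean w) 0 `](4^-1 : R), 2^-1] = (2^-1 - 4^-1)%:E.
  by apply: normal_prob0_itv; lra.
have u2 : normal_prob (2 * mean w) 0 `](2^-1 : R), 1] = (1 - 2^-1)%:E.
  by apply: normal_prob0_itv; lra.
by rewrite !ltr0_sqrtr // u1 u2 => -[]; lra.
Qed.

End gaussian_vector_coordinates.

Lemma measure_bigsetU_le d (T : measurableType d) (R : realType)
    (mu : {measure set T -> \bar R}) (I : eqType) (s : seq I) (F : I -> set T) (r : R) :
  (forall i, measurable (F i)) -> (forall i, (mu (F i) <= r%:E)%E) ->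
  (mu (\big[setU/set0]_(i <- s) F i) <= ((size s)%:R * r)%:E)%E.
Proof.
move=> mF muF; elim: s => [|i s IHs]; first by rewrite big_nil measure0 mul0r.
rewrite big_cons /= -add1n natrD mulrDl mul1r EFinD.
have mU : measurable (\big[setU/set0]_(j <- s) F j) by exact: bigsetU_measurable.
exact: le_trans (measureU2 _ (mF i) mU) (leeD (muF i) IHs).
Qed.

Lemma probability_ge_of_cover d (T : measurableType d) (R : realType)
    (P : probability T R) (A B C : set T) (p e : R) :
  measurable A -> measurable B -> measurable C -> A `<=` B `|` C ->
  (p%:E <= P A)%E -> (P C <= e%:E)%E -> ((p - e)%:E <= P B)%E.
Proof.
move=> mA mB mC ABC pA Ce.
have pBe : (p%:E <= P B + e%:E)%E.
  apply: le_trans pA (le_trans (le_measure _ _ _ ABC) _); rewrite ?inE //.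
  - exact: measurableU.
  - exact: le_trans (measureU2 _ mB mC) (leeD2l _ Ce).
by rewrite EFinB leeBlDr.
Qed.

Lemma expRN_sqr_sqrt_ln (R : realType) (M : R) : 1 <= M ->
  expR (- (Num.sqrt (2 * ln M) ^+ 2 / 2)) = M^-1.
Proof.
move=> M1; rewrite sqr_sqrtr ?mulr_ge0 ?ln_ge0 // mulrC mulKf ?pnatr_eq0 //.
by rewrite expRN lnK // posrE; lra.
Qed.

Lemma unsaturated_of_sample_bounds (R : realType) (Z Q : finType)
    (g mu sd gs : Z * Q -> R) (rhom nu L : R) (zt : Z) (xstar x : Q) :
  Ef_event g mu sd rhom nu ->
  mu (zt, xstar) + nu * sd (zt, xstar) <= gs (zt, xstar) ->
  gs (zt, xstar) <= gs (zt, x) ->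
  gs (zt, x) <= mu (zt, x) + L * (nu * sd (zt, x)) ->
  ~~ saturated g sd rhom (nu * (1 + L)) zt xstar x.
Proof.
move=> Ef opt_hi x_ge x_lo; rewrite /saturated -leNgt.
have Efw w : - (nu * sd w) <= mu w - rhom * g w <= nu * sd w by rewrite -ler_norml Ef.
have /andP[opt_lo _] := Efw (zt, xstar).
have /andP[_ x_hi] := Efw (zt, x).
rewrite mulrBr (_ : nu * (1 + L) * _ = nu * sd (zt, x) + L * (nu * sd (zt, x))); last by ring.
lra.
Qed.

Lemma natr_card_div_le (R : realFieldType) (a b n : nat) : (0 < a)%N -> (0 < b)%N ->
  b%:R / (a * b * n)%:R <= (n%:R)^-1 :> R.
Proof.
move=> a0 b0; have [->|n0] := posnP n; first by rewrite muln0 !invr0 mulr0.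
have -> : b%:R / (a * b * n)%:R = (a%:R)^-1 * (n%:R)^-1 :> R.
  by rewrite !natrM; field; rewrite !pnatr_eq0 -!lt0n a0 b0 n0.
by rewrite ler_piMl ?invr_ge0 ?ler0n // invf_le1 ?ler1n ?ltr0n.
Qed.

Section thompson_sampling_step.
Variables (R : realType) (Z Q : finType) (d : measure_display) (Omega : measurableType d).
Variables (P : probability Omega R) (G : Omega -> Z * Q -> R) (xt : Omega -> Q).
Variables (mu : Z * Q -> R) (C : Z * Q -> Z * Q -> R) (nu : R).
Variables (g : Z * Q -> R) (rhom : R) (zt : Z) (xstar : Q).
Let sd w := Num.sqrt (C w w).
Hypothesis nu_ge0 : 0 <= nu.
Hypothesis gaussG : gaussian_vector P G mu (fun w w' => nu ^+ 2 * C w w').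
Hypothesis Ef : Ef_event g mu sd rhom nu.
Hypothesis measurable_xt : forall x, measurable (xt @^-1` [set x]).
Hypothesis xt_argmax : forall om x, G om (zt, x) <= G om (zt, xt om).

Let sample_sdE w : Num.sqrt (nu ^+ 2 * C w w) = nu * sd w.
Proof. by rewrite sqrtrM ?sqr_ge0 // sqrtr_sqr ger0_norm. Qed.

Let opt_high := (fun om => G om (zt, xstar)) @^-1`
  `[(mu (zt, xstar) + nu * sd (zt, xstar))%R, +oo[.
Let overshoot L x := (fun om => G om (zt, x)) @^-1`
  `](mu (zt, x) + L * (nu * sd (zt, x)))%R, +oo[.
Let unsaturated c := [set om | ~~ saturated g sd rhom c zt xstar (xt om)].

Let p_const_le_opt_high : (p_const%:E <= P opt_high)%E.
Proof.
rewrite /opt_high -sample_sdE (gaussian_vector_coord_law gaussG); last exact: measurable_itv.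
exact/gauss_law_ge_p_const/(gaussian_vector_var_ge0 gaussG).
Qed.

Let overshoot_le L x : 0 <= L -> (P (overshoot L x) <= (expR (- (L ^+ 2 / 2)))%:E)%E.
Proof.
move=> L0; rewrite /overshoot -sample_sdE (gaussian_vector_coord_law gaussG).
  exact/gauss_law_upper_tail/L0/(gaussian_vector_var_ge0 gaussG).
exact: measurable_itv.
Qed.

Let measurable_unsaturated c : measurable (unsaturated c).
Proof.
have -> : unsaturated c =
    \bigcup_(x in [set x | ~~ saturated g sd rhom c zt xstar x]) (xt @^-1` [set x]).
  apply/seteqP; split => [om ?|om [x ? /= xE]]; first by exists (xt om).
  by rewrite /unsaturated /= xE.
by apply: fin_bigcup_measurable => //; exact: finite_finset.
Qed.

Let opt_high_sub L :
  opt_high `<=` unsaturated (nu * (1 + L)) `|` \big[setU/set0]_(x <- enum Q) overshoot L x.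
Proof.
move=> om opt_om.
have [|no_overshoot] := pselect ((\big[setU/set0]_(x <- enum Q) overshoot L x) om).
  by right.
left; apply: (unsaturated_of_sample_bounds Ef _ (xt_argmax om xstar)).
  by move: opt_om; rewrite /opt_high /= in_itv /= andbT.
rewrite leNgt; apply/negP => over_om; apply: no_overshoot.
rewrite -bigcup_seq; exists (xt om); first by rewrite /= mem_enum.
by rewrite /overshoot /= in_itv /= over_om.
Qed.

Lemma unsaturated_prob_ge t : (0 < t)%N ->
  ((p_const - 1 / t%:R ^+ 2)%:E <=
     P [set om | ~~ saturated g sd rhom (c_t Z Q nu t) zt xstar (xt om)])%E.
Proof.
move=> t0; set M : R := (#|Z| * #|Q| * t ^ 2)%N%:R.
have [Z0 Q0] : (0 < #|Z|)%N /\ (0 < #|Q|)%N by split; apply/card_gt0P; [exists zt | exists xstar].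
have M1 : 1 <= M by rewrite ler1n !muln_gt0 Z0 Q0 ?expn_gt0 t0.
have L0 : 0 <= Num.sqrt (2 * ln M) := sqrtr_ge0 _.
have m_coord x (i : interval R) : measurable ((fun om => G om (zt, x)) @^-1` [set` i]).
  by apply: (measurable_gaussian_vector_coord gaussG); exact: measurable_itv.
have m_over : measurable (\big[setU/set0]_(x <- enum Q) overshoot (Num.sqrt (2 * ln M)) x).
  by apply: bigsetU_measurable => x _; exact: m_coord.
apply: (probability_ge_of_cover (m_coord _ _) (measurable_unsaturated _) m_over
  (opt_high_sub _) p_const_le_opt_high).
apply: le_trans (measure_bigsetU_le _ (fun x => m_coord x _) (fun x => overshoot_le x L0)) _.
rewrite expRN_sqr_sqrt_ln // -cardT lee_fin div1r -natrX.
exact: natr_card_div_le.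
Qed.

End thompson_sampling_step.

Lemma nu_t_ge0 (R : realType) (Z Q : finType) (k : Z * Q -> Z * Q -> R)
    (lam Bf Rn By delta : R) (m t : nat) (ws : 'I_t.-1 -> Z * Q) :
  0 <= Bf -> 0 <= Rn -> 0 <= By -> 0 <= nu_t k lam Bf Rn By delta m ws.
Proof.
move=> Bf0 Rn0 By0; rewrite /nu_t /beta_t.
by rewrite !addr_ge0 ?mulr_ge0 ?addr_ge0 ?sqrtr_ge0 // sumr_ge0 // => i _; exact: sqrtr_ge0.
Qed.

Theorem lemma10
  (R : realType) (Z Q : finType)
  (k : Z * Q -> Z * Q -> R) (g : Z * Q -> R)
  (lam Bf Rn By delta : R) (D : nat -> R) (m t : nat)
  (ws : 'I_t.-1 -> Z * Q) (y : 'I_t.-1 -> R) (dl : 'I_t.-1 -> nat)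
  (zt : Z) (xstar : Q)
  (d : measure_display) (Omega : measurableType d) (P : probability Omega R)
  (gt : Omega -> Z * Q -> R) (xt : Omega -> Q) :
  psd_kernel k -> (forall w w', k w w' <= 1) ->
  0 <= Bf -> rkhs_norm_le k g Bf ->
  0 < lam -> 0 < delta < 1 -> 0 <= Rn -> 0 <= By ->
  (forall i, 0 <= D i) -> series D @ \oo --> (1 : R) ->
  (1 <= m)%N -> (1 <= t)%N ->
  (forall i, `|y i| <= By) ->
  (forall x, g (zt, x) <= g (zt, xstar)) ->
  let mu := post_mean k lam ws (ytil m t y dl) in
  let sd := post_sd k lam ws in
  let nu := nu_t k lam Bf Rn By delta m ws in
  let c := c_t Z Q nu t in
  let rhom := rho D m in
  Ef_event g mu sd rhom nu ->
  gaussian_vector P gt mu (fun w w' => nu ^+ 2 * post_cov k lam ws w w') ->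
  (forall x, measurable (xt @^-1` [set x])) ->
  (forall om x, gt om (zt, x) <= gt om (zt, xt om)) ->
  ((p_const - 1 / (t%:R ^+ 2))%:E <=
     P [set om | ~~ saturated g sd rhom c zt xstar (xt om)])%E.
Proof.
(* Beyond E^f(t), only [0 <= Bf, Rn, By] (giving [0 <= nu]) is used; the other
   hypotheses only serve to make E^f(t) likely. *)
move=> _ _ Bf0 _ _ _ Rn0 By0 _ _ _ t_gt0 _ _ mu sd nu c rhom Ef gaussG measurable_xt argmax.
have nu_ge0 : 0 <= nu by exact: nu_t_ge0.
exact: (unsaturated_prob_ge xstar nu_ge0 gaussG Ef measurable_xt argmax t_gt0).
Qed.
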